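(* Let $n\ge 2$ be an integer, and let $G$ be a finite group with a subgroup $H=\langle x,y\mid x^{2^n}=e,\ y^2=e,\ x^y=x^{-1}\rangle\cong D_{2^{n+1}}$. Then $H$ is a perfect code of $G$ if and only if for each $a\in N_G(H)\setminus H$ with $a^2\in H$ all of the following hold: (a) $a^2\in\langle x\rangle$; (b) if $\langle x,a\rangle\cong C_{2^{n+1}}$, then $a^y=a^{-1}$; (c) if $\langle x,a\rangle\cong Q_{2^{n+1}}$, then $[a,y]\in\langle x^2\rangle$.
   Context: $D_{2m}$ is the dihedral group of order $2m$, $Q_{2^{m}}$ the generalized quaternion group of order $2^m$, $x^y=y^{-1}xy$, $[a,y]=a^{-1}y^{-1}ay$. For a group $G$ with identity $e$ and an inverse-closed subset $S\subseteq G\setminus\{e\}$, the Cayley graph $\mathrm{Cay}(G,S)$ has vertex set $G$ and edges $\{g,sg\}$ for $s\in S$, $g\in G$. A perfect code in a graph is an independent set $C$ of vertices such that every vertex outside $C$ is adjacent to exactly one vertex of $C$. A subgroup $H$ of $G$ is a perfect code of $G$ if some Cayley graph of $G$ admits $H$ as a perfect code. *)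

From mathcomp Require Import all_boot all_fingroup all_solvable.
Set Implicit Arguments. Unset Strict Implicit. Unset Printing Implicit Defensive.
Import GroupScope.
Local Open Scope group_scope.

Definition cay_adj (gT : finGroupType) (S : {set gT}) (u v : gT) : bool :=
  v * u^-1 \in S.

Definition cay_conn_set (gT : finGroupType) (G S : {set gT}) : Prop :=
  S \subset G :\ 1 /\ (forall s, s \in S -> s^-1 \in S).

Definition perfect_code_in_cay (gT : finGroupType) (G S C : {set gT}) : Prop :=
  [/\ C \subset G,
      (forall u v, u \in C -> v \in C -> ~~ cay_adj S u v) &
      (forall v, v \in G :\: C -> #|[set u in C | cay_adj S u v]| = 1%N)].

Definition perfect_code_of (gT : finGroupType) (G H : {set gT}) : Prop :=
  exists S : {set gT}, cay_conn_set G S /\ perfect_code_in_cay G S H.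

From mathcomp Require Import all_boot all_fingroup all_solvable zify.
Set Implicit Arguments. Unset Strict Implicit. Unset Printing Implicit Defensive.
Import GroupScope.
Local Open Scope group_scope.

(* A subgroup H of G is a perfect code of some Cay(G, S) iff G \ H has an
   inverse-closed right transversal S of H.  Every coset H a with a in N_G(H) \ H
   and a^2 in H must then contain an involution of S; for a 2-group H this
   suffices, because S can be grown greedily: an uncovered coset H g is either
   self-inverse and receives an involution, or is paired through some s in H g
   with an uncovered coset H s^-1 inside H g^-1 H.  The partner exists by
   counting: H g H has |H| or a multiple of 2|H| elements, and the involutions
   of S only lie in cosets normalizing H.
   For the dihedral H = <x, y>, such an a normalizes <x>, say x^a = x^k with k
   odd, and the squares (x^i a)^2 and (x^i y a)^2 sweep the cosets of <x x^a>
   and <x (x^a)^-1> through a^2 and y y^(a^-1) a^2.  One of these subgroups is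
   <x^2>, depending on k mod 4.  Condition (b) covers the case where a^2
   generates <x>, so that <x, a> = <a> is cyclic and y a is an involution, and
   condition (c) the case where <x, a> is generalized quaternion. *)

Lemma invg_sqr1 (gT : finGroupType) (t : gT) : t ^+ 2 = 1 -> t^-1 = t.
Proof. by move=> t2; apply/eqP; rewrite eq_invg_mul -expg2 t2. Qed.

Lemma even_card_invg_free (gT : finGroupType) (T : {set gT}) :
  T^-1 = T -> {in T, forall t, t^-1 != t} -> ~~ odd #|T|.
Proof.
(* A keeps the element of smaller rank from each pair {t, t^-1}. *)
move=> TV freeT; pose A := [set t in T | enum_rank t < enum_rank t^-1].
have defT : T = A :|: A^-1.
  apply/setP=> t; rewrite !inE invgK -mem_invg TV -andb_orr.
  case Tt: (t \in T) => //=; rewrite -neq_ltn eq_sym (inj_eq val_inj).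
  by rewrite (inj_eq enum_rank_inj) freeT.
have disjA : [disjoint A & A^-1].
  apply/pred0P=> t /=; rewrite !inE invgK; apply/negP=> /andP[/andP[_ lt1] /andP[_ lt2]].
  by have := ltn_trans lt1 lt2; rewrite ltnn.
by rewrite defT cardsU (disjoint_setI0 disjA) cards0 subn0 card_invg addnn odd_double.
Qed.

Lemma order_expg_half (gT : finGroupType) (u : gT) m :
  #[u] = (2 ^ m.+1)%N -> #[u ^+ (2 ^ m)] = 2.
Proof. by move=> ou; rewrite orderXdiv ou expnS ?mulnK ?dvdn_mull ?expn_gt0. Qed.

Section DoubleCosets.
Variables (gT : finGroupType) (H : {group gT}).
Implicit Types (g t : gT) (T : {set gT}).

Lemma mem_dcoset g h1 h2 : h1 \in H -> h2 \in H -> h1 * g * h2 \in H :* g * H.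
Proof. by move=> Hh1 Hh2; rewrite mem_mulg // mem_rcoset mulgK. Qed.

Lemma dcosetP g t :
  reflect (exists2 h1, h1 \in H & exists2 h2, h2 \in H & t = h1 * g * h2)
          (t \in H :* g * H).
Proof.
apply: (iffP mulsgP) => [[u h2 /rcosetP[h1 Hh1 ->] Hh2 ->] | [h1 Hh1 [h2 Hh2 ->]]].
  by exists h1 => //; exists h2.
by exists (h1 * g) h2; rewrite ?mem_rcoset ?mulgK.
Qed.

Lemma rcoset_sub_dcoset g : H :* g \subset H :* g * H.
Proof. exact/mulg_subl/group1. Qed.

Lemma dcoset_trans g t : t \in H :* g * H -> H :* t * H = H :* g * H.
Proof.
case/dcosetP=> h1 Hh1 [h2 Hh2 ->].
by rewrite !rcosetM (rcoset_id Hh1) -mulgA (lcoset_id Hh2).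
Qed.

Lemma dcosetV g : (H :* g * H)^-1 = H :* g^-1 * H.
Proof. by rewrite invMg invGid invg_rcoset mulgA. Qed.

Lemma dcoset_norm g : g \in 'N(H) -> H :* g * H = H :* g.
Proof. by move=> Ng; rewrite -mulgA -norm_rlcoset // mulgA mulGid. Qed.

Lemma card_dcoset_norm g : (#|H :* g * H| == #|H|) = (g \in 'N(H)).
Proof.
apply/eqP/idP=> [oD | Ng]; last by rewrite dcoset_norm ?card_rcoset.
have sub_eq_dcoset (A : {set gT}) : A \subset H :* g * H -> #|A| = #|H| -> A = H :* g * H.
  by move=> sAD oA; apply/eqP; rewrite eqEcard sAD oA oD leqnn.
have lcoset_sub : g *: H \subset H :* g * H by rewrite mulSg // sub1set rcoset_refl.
apply/normP; rewrite conjsgE (sub_eq_dcoset _ (rcoset_sub_dcoset g)) ?card_rcoset //.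
by rewrite -(sub_eq_dcoset _ lcoset_sub) ?card_lcoset // lcosetK.
Qed.

Lemma card_dcoset_2group g : 2.-group H ->
  #|H :* g * H| = #|H| \/ #|H|.*2 %| #|H :* g * H|.
Proof.
move=> /p_natP[m oH].
have -> : H :* g * H = H * H :^ g^-1 :* g.
  by rewrite -!mulgA conjsgE invgK -mulgA -rcosetM mulVg rcoset1.
have := mul_cardG H (H :^ g^-1)%G; rewrite /= cardJg card_rcoset => oHH.
have /dvdn_pfactor[//|e _ oD] : (#|(H * H :^ g^-1)%g| %| 2 ^ (m + m))%N.
  by rewrite expnD -oH oHH dvdn_mulr.
have : #|H| <= #|H * H :^ g^-1| by rewrite subset_leq_card ?mulg_subl ?group1.
rewrite oH oD leq_exp2l // leq_eqVlt => /orP[/eqP-> | lt_me]; first by left.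
by right; rewrite -mul2n -expnS dvdn_exp2l.
Qed.

Lemma card_mulg_transversal T : {in T &, forall s t, t \in H :* s -> t = s} ->
  #|H * T| = (#|H| * #|T|)%N.
Proof.
move=> uniqT; have -> : H * T = uncurry mul @: setX H T by exact: curry_imset2X.
rewrite -cardsX card_in_imset //.
move=> [h s] [h' t] /setXP[Hh Ts] /setXP[Hh' Tt] /= eq_hs.
have def_t : t = s.
  by apply: uniqT; rewrite // mem_rcoset -(mulKg h' t) -eq_hs !mulgA mulgK groupM ?groupV.
by move: eq_hs; rewrite def_t => /mulIg->.
Qed.

End DoubleCosets.

Section InverseClosedTransversals.
Variables (gT : finGroupType) (G H : {group gT}).
Hypothesis sHG : H \subset G.
Implicit Types (g s t : gT) (S : {set gT}).

Definition coset_involution_condition :=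
  forall a, a \in 'N_G(H) :\: H -> a ^+ 2 \in H -> exists2 h, h \in H & (h * a) ^+ 2 = 1.

Lemma perfect_code_of_transversal S :
    S \subset G :\: H -> S^-1 = S ->
    {in S &, forall s t, t \in H :* s -> t = s} -> G :\: H \subset H * S ->
  perfect_code_of G H.
Proof.
move=> sSGH SV uniqS covS.
have invS s : s \in S -> s^-1 \in S by rewrite -mem_invg SV.
have notHS s : s \in S -> s \notin H by move/(subsetP sSGH)/setDP=> [].
exists S; split.
  split=> //; apply/subsetP=> s /(subsetP sSGH)/setDP[Gs notHs].
  by rewrite !inE Gs andbT; apply: contraNneq notHs => ->.
split=> // [u v Hu Hv | v /setDP[Gv notHv]].
  by apply: contraL (groupM Hv (groupVr Hu)) => /notHS.
have /(subsetP covS)/mulsgP[h s Hh Ss def_v'] : v^-1 \in G :\: H.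
  by rewrite in_setD !groupV notHv Gv.
apply/eqP/cards1P; exists (s * v); apply/setP=> u; rewrite !inE /cay_adj.
apply/andP/eqP=> [[Hu /invS] | ->].
  rewrite invMg invgK => Suv; rewrite -[u](mulgKV v); congr (_ * _).
  by apply: uniqS; rewrite // mem_rcoset def_v' mulgA mulgK groupM.
by split; rewrite ?invMg ?mulKVg ?invS // -groupV invMg def_v' mulgK.
Qed.

Lemma perfect_code_coset_involution a : perfect_code_of G H ->
  a \in 'N_G(H) :\: H -> a ^+ 2 \in H -> exists2 h, h \in H & (h * a) ^+ 2 = 1.
Proof.
case=> S [[_ invS] [_ _ uniq_nbr]] /setDP[/setIP[Ga Na] notHa] a2H.
have /uniq_nbr/eqP/cards1P[u nbr_a] : a \in G :\: H by rewrite inE notHa Ga.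
have /setIdP[Hu Sau] : u \in [set v in H | cay_adj S v a] by rewrite nbr_a set11.
(* Both u and a u^-1 a are the neighbour of a in H, so a u^-1 is an involution. *)
have Hu' : a * u^-1 * a \in H.
  have -> : a * u^-1 * a = u^-1 ^ a^-1 * a ^+ 2.
    by rewrite conjgE invgK expg2 !mulgA mulgKV.
  by rewrite groupM // memJ_norm ?groupV.
have : a * u^-1 * a \in [set v in H | cay_adj S v a].
  rewrite inE Hu' /cay_adj !invMg invgK !mulgA mulgV mul1g.
  by rewrite -[u * a^-1]invgK invMg invgK invS.
rewrite nbr_a inE => /eqP def_u.
exists (u^-1 ^ a^-1); first by rewrite memJ_norm ?groupV.
by rewrite conjgE invgK !mulgA mulgKV expg2 !mulgA def_u mulgV.
Qed.

Lemma dcoset_subD g : g \in G :\: H -> H :* g * H \subset G :\: H.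
Proof.
case/setDP=> Gg notHg; apply/subsetP=> _ /dcosetP[h1 Hh1 [h2 Hh2 ->]].
have [Gh1 Gh2] := (subsetP sHG h1 Hh1, subsetP sHG h2 Hh2).
rewrite in_setD (groupM (groupM Gh1 Gg) Gh2) andbT; apply: contra notHg => Ht.
by rewrite -(groupMl _ Hh1) -(groupMr _ Hh2).
Qed.

Definition uncovered S := (G :\: H) :\: H * S.

(* The invariant of the greedy construction; its last clause is what makes the
   parity count in [uncovered_partner] work. *)
Definition admissible S :=
  [/\ S \subset G :\: H, S^-1 = S,
      {in S &, forall s t, t \in H :* s -> t = s} &
      {in S, forall s, s ^+ 2 = 1 -> s \in 'N(H)}].

Lemma uncovered_rcoset S g t : g \in uncovered S -> t \in H :* g -> t \in uncovered S.
Proof.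
case/setDP=> /setDP[Gg notHg] notHSg /rcosetP[h Hh ->].
rewrite !in_setD (groupMl _ Hh) notHg (groupM (subsetP sHG h Hh) Gg) !andbT.
apply: contra notHSg => /mulsgP[h' s Hh' Ss def_hg].
by rewrite -(mulKg h g) def_hg mulgA mem_mulg ?groupM ?groupV.
Qed.

Lemma uncovered_proper S S' b :
  S \subset S' -> b \in S' -> b \in uncovered S -> uncovered S' \proper uncovered S.
Proof.
move=> sSS' S'b Ub; apply/properP; split; last first.
  by exists b; rewrite // in_setD -[b]mul1g mem_mulg.
apply/subsetP=> g /setDP[GHg notHS'g]; rewrite in_setD GHg andbT.
by apply: contra notHS'g; apply/subsetP/mulgS.
Qed.

Lemma transversal_setU1 S b : {in S &, forall s t, t \in H :* s -> t = s} ->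
  b \notin H * S -> {in b |: S &, forall s t, t \in H :* s -> t = s}.
Proof.
move=> uniqS notHSb.
have notHu u : u \in S -> b \notin H :* u.
  by move=> Su; apply: contra notHSb => /rcosetP[h Hh ->]; apply: mem_mulg.
move=> s t /setU1P[-> | Ss] /setU1P[-> | St] //; last exact: uniqS.
  by rewrite rcoset_sym => /(negP (notHu t St)).
by move/(negP (notHu s Ss)).
Qed.

Lemma admissible_add_involution S b : admissible S -> b \in uncovered S ->
  b ^+ 2 = 1 -> b \in 'N(H) -> admissible (b |: S).
Proof.
case=> sSGH SV uniqS invoS /setDP[GHb notHSb] b2 Nb; split.
- by rewrite subUset sub1set GHb.
- by rewrite invUg invg_set1 invg_sqr1 // SV.
- exact: transversal_setU1.
- by move=> s /setU1P[-> | /invoS].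
Qed.

Lemma admissible_add_pair S s : admissible S -> s \in uncovered S ->
  s^-1 \in uncovered S -> s ^+ 2 \notin H -> admissible (s |: (s^-1 |: S)).
Proof.
case=> sSGH SV uniqS invoS /setDP[GHs notHSs] /setDP[GHsV notHSsV] s2H; split.
- by rewrite !subUset !sub1set GHs GHsV.
- by rewrite !invUg !invg_set1 invgK SV setUCA.
- apply: transversal_setU1; first exact: transversal_setU1.
  by rewrite mulgU inE negb_or notHSs mem_rcoset invgK -expg2 s2H.
- move=> t /setU1P[-> | /setU1P[-> | /invoS//]] t2; case/negP: s2H.
    by rewrite t2 group1.
  by rewrite -groupV -expgVn t2 group1.
Qed.

Lemma card_dcoset_ge_uncovered S g : {in S &, forall s t, t \in H :* s -> t = s} ->
  g \in uncovered S -> #|H| * #|S :&: H :* g * H| + #|H| <= #|H :* g * H|.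
Proof.
move=> uniqS Ug; set D := H :* g * H; set T := S :&: D.
have disjHT : H * T :&: H :* g = set0.
  apply/setP=> t; rewrite in_setI in_set0; apply/andP=> -[HTt].
  case/(uncovered_rcoset Ug)/setDP=> _ /negP[].
  exact: subsetP (mulgS H (subsetIl S D)) t HTt.
have sHTD : H * T :|: H :* g \subset D.
  rewrite subUset rcoset_sub_dcoset andbT.
  by rewrite (subset_trans (mulgS H (subsetIr S D))) // /D !mulgA mulGid.
have := subset_leq_card sHTD; rewrite cardsU disjHT cards0 subn0 card_rcoset.
by rewrite card_mulg_transversal // => s t /setIP[Ss _] /setIP[St _]; apply: uniqS.
Qed.

Lemma dcoset_sub_cover S u : u \in G :\: H ->
  H :* u * H \subset H * (S :&: H :* u * H) :|: uncovered S.
Proof.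
move=> GHu; apply/subsetP=> t Dt; rewrite in_setU.
have [/mulsgP[h s Hh Ss def_t] | notHSt] := boolP (t \in H * S); last first.
  by rewrite in_setD notHSt (subsetP (dcoset_subD GHu)) ?orbT.
apply/orP; left; rewrite def_t mem_mulg // in_setI Ss -(dcoset_trans Dt).
by rewrite -(mulKg h s) -def_t -[_ * t]mulg1 mem_dcoset ?groupV.
Qed.

Lemma card_dcoset_le_unpaired S g : S^-1 = S ->
    {in S &, forall s t, t \in H :* s -> t = s} -> g \in uncovered S ->
    {in uncovered S :&: H :* g^-1 * H, forall t, t \in H :* g} ->
  #|H :* g * H| <= #|H| * #|S :&: H :* g * H| + #|H :* g :&: H :* g^-1 * H|.
Proof.
move=> SV uniqS /setDP[/setDP[Gg notHg] _] unpaired; set D' := H :* g^-1 * H.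
have GHgV : g^-1 \in G :\: H by rewrite in_setD !groupV notHg.
have TV : S :&: D' = (S :&: H :* g * H)^-1 by rewrite invIg SV dcosetV.
rewrite -card_invg dcosetV -(card_invg (S :&: _)) -TV -card_mulg_transversal; last first.
  by move=> s t /setIP[Ss _] /setIP[St _]; apply: uniqS.
apply: leq_trans (subset_leq_card _) (leq_card_setU _ _).
apply/subsetP=> t D't; have := subsetP (dcoset_sub_cover S GHgV) t D't.
rewrite !in_setU => /orP[-> // | Ut]; rewrite in_setI D't andbT unpaired ?orbT //.
by rewrite in_setI Ut.
Qed.

Lemma admissible_dcoset_even S g : admissible S -> (H :* g * H)^-1 = H :* g * H ->
  #|H :* g * H| != #|H| -> ~~ odd #|S :&: H :* g * H|.
Proof.
case=> _ SV _ invoS DV notND; apply: even_card_invg_free; first by rewrite invIg SV DV.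
move=> t /setIP[St Dt]; apply: contra notND => /eqP tV.
rewrite -(dcoset_trans Dt) card_dcoset_norm (invoS t St) //.
by rewrite expg2 -{1}tV mulVg.
Qed.

Section Greedy.
Hypothesis pH : 2.-group H.
Hypothesis coset_inv : coset_involution_condition.

Lemma uncovered_partner S g : admissible S -> g \in uncovered S ->
    ~~ ((g \in 'N(H)) && (g ^+ 2 \in H)) ->
  exists2 g', g' \in uncovered S :&: H :* g^-1 * H & g' \notin H :* g.
Proof.
move=> admS Ug not_inv; have [_ SV uniqS _] := admS.
have [/exists_inP[g' ? ?] | /exists_inPn no_partner] :=
  boolP [exists g' in uncovered S :&: H :* g^-1 * H, g' \notin H :* g].
  by exists g'.
exfalso; set D := H :* g * H; set D' := H :* g^-1 * H; set T := S :&: D.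
have lbD : #|H| * #|T| + #|H| <= #|D| := card_dcoset_ge_uncovered uniqS Ug.
have ubD : #|D| <= #|H| * #|T| + #|H :* g :&: D'|.
  by apply: card_dcoset_le_unpaired SV uniqS Ug _ => t /no_partner/negPn.
have [gD'0 | [t /setIP[gt D't]]] := set_0Vmem (H :* g :&: D').
  by move: (leq_trans lbD ubD); rewrite gD'0 cards0 leq_add2l leqNgt cardG_gt0.
have D'D : D' = D.
  have Dt : t \in D := subsetP (rcoset_sub_dcoset H g) t gt.
  exact: etrans (esym (dcoset_trans D't)) (dcoset_trans Dt).
have oD : #|D| = (#|H| * #|T|.+1)%N.
  apply/eqP; rewrite eqn_leq mulnS addnC lbD andbT (leq_trans ubD) // leq_add2l.
  by rewrite -(card_rcoset H g) subset_leq_card ?subsetIl.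
have notND : #|D| != #|H|.
  rewrite card_dcoset_norm; apply: contra not_inv => Ng; rewrite Ng /=.
  have : g^-1 \in H :* g.
    by rewrite -dcoset_norm // -/D -D'D (subsetP (rcoset_sub_dcoset H g^-1)) ?rcoset_refl.
  by rewrite mem_rcoset -invMg groupV -expg2.
have [oDH | ] := card_dcoset_2group g pH; first by rewrite oDH eqxx in notND.
rewrite oD -mul2n [X in _ %| X]mulnC (dvdn_pmul2r (cardG_gt0 H)) dvdn2 /= negbK.
by apply/negP/(admissible_dcoset_even admS); rewrite // dcosetV -/D' D'D.
Qed.

Lemma admissible_extend S g : admissible S -> g \in uncovered S ->
  exists2 S', admissible S' & uncovered S' \proper uncovered S.
Proof.
move=> admS Ug; have [/andP[Ng g2H] | not_inv] := boolP ((g \in 'N(H)) && (g ^+ 2 \in H)).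
  have [|h Hh hg2] := coset_inv (a := g) _ g2H.
    by case/setDP: Ug => /setDP[Gg notHg] _; rewrite in_setD notHg in_setI Gg Ng.
  have Uhg : h * g \in uncovered S.
    by apply: uncovered_rcoset Ug _; rewrite mem_rcoset mulgK.
  exists (h * g |: S); last exact: uncovered_proper (subsetUr _ _) (setU11 _ _) Uhg.
  by apply: admissible_add_involution; rewrite // groupM // (subsetP (normG H)).
have [g' /setIP[Ug' /dcosetP[h1 Hh1 [h2 Hh2 def_g']]] notHgg'] :=
  uncovered_partner admS Ug not_inv.
pose s := h2^-1 * g.
have sHg : s \in H :* g by rewrite mem_rcoset mulgK groupV.
have sVHg' : s^-1 \in H :* g'.
  by rewrite mem_rcoset def_g' !invMg !invgK !mulgA mulgK mulVg mul1g groupV.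
have [Us UsV] := (uncovered_rcoset Ug sHg, uncovered_rcoset Ug' sVHg').
exists (s |: (s^-1 |: S)).
  apply: admissible_add_pair admS Us UsV _.
  apply: contra notHgg' => s2H; rewrite rcoset_sym in sVHg'.
  apply: rcoset_trans sVHg' (rcoset_trans _ sHg).
  by rewrite mem_rcoset -invMg groupV -expg2.
exact: uncovered_proper (subset_trans (subsetUr _ S) (subsetUr _ _)) (setU11 _ _) Us.
Qed.

End Greedy.

Lemma admissible_cover : 2.-group H -> coset_involution_condition ->
  exists2 S, admissible S & G :\: H \subset H * S.
Proof.
move=> pH coset_inv.
suff IH k S : admissible S -> #|uncovered S| < k ->
    exists2 S', admissible S' & uncovered S' = set0.
  have adm0 : admissible set0.
    by split=> [||s t|s]; rewrite ?sub0set ?inE //; apply/setP=> s; rewrite !inE.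
  have [k ltUk] := ubnP #|uncovered set0|.
  by have [S admS /eqP] := IH k set0 adm0 ltUk; rewrite setD_eq0; exists S.
elim: k S => // k IHk S admS ltUk.
have [U0 | [g Ug]] := set_0Vmem (uncovered S); first by exists S.
have [S' admS' ltU] := admissible_extend pH coset_inv admS Ug.
exact: IHk S' admS' (leq_trans (proper_card ltU) ltUk).
Qed.

Theorem perfect_code_2groupP : 2.-group H ->
  perfect_code_of G H <-> coset_involution_condition.
Proof.
move=> pH; split=> [pcH a | coset_inv]; first exact: perfect_code_coset_involution.
have [S [sSGH SV uniqS _] covS] := admissible_cover pH coset_inv.
exact: perfect_code_of_transversal covS.
Qed.

End InverseClosedTransversals.

Section CyclicExtension.
Variables (gT : finGroupType) (x a : gT).
Hypotheses (nXa : a \in 'N(<[x]>)) (a2X : a ^+ 2 \in <[x]>).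

Lemma join_cycle_coset : <<[set x; a]>> = <[x]> :|: <[x]> :* a.
Proof.
have nXaV : a^-1 \in 'N(<[x]>) by rewrite groupV.
have gXXa : group_set (<[x]> :|: <[x]> :* a).
  apply/group_setP; split=> [|u v]; first by rewrite inE group1.
  rewrite !inE !mem_rcoset => /orP[Xu | Xua] /orP[Xv | Xva].
  - by rewrite groupM.
  - by apply/orP; right; rewrite -mulgA groupM.
  - apply/orP; right.
    have -> : u * v * a^-1 = u * a^-1 * v ^ a^-1 by rewrite conjgE invgK !mulgA mulgKV.
    by rewrite groupM ?memJ_norm.
  - apply/orP; left.
    have -> : u * v = u * a^-1 * (v * a^-1) ^ a^-1 * a ^+ 2.
      by rewrite conjgE invgK expg2 !mulgA !mulgKV.
    by rewrite groupM // groupM // memJ_norm.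
have Kx : x \in <<[set x; a]>> by rewrite mem_gen ?setU11.
have Ka : a \in <<[set x; a]>> by rewrite mem_gen // !inE eqxx orbT.
apply/eqP; rewrite eqEsubset (gen_subG _ (Group gXXa)) subUset cycle_subG Kx /=.
apply/andP; split.
  by apply/subsetP=> t /set2P[]->; rewrite !inE ?cycle_id // mem_rcoset mulgV group1 orbT.
apply/subsetP=> t; rewrite mem_rcoset => Xta; rewrite -(mulgKV a t) groupM //.
by apply: subsetP Xta; rewrite cycle_subG.
Qed.

Lemma card_join_cycle_coset : a \notin <[x]> -> #|<<[set x; a]>>| = (2 * #[x])%N.
Proof.
move=> notXa; rewrite join_cycle_coset cardsU card_rcoset -orderE.
suff -> : <[x]> :&: <[x]> :* a = set0 by rewrite cards0 subn0 addnn mul2n.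
apply/setP=> t; rewrite !inE mem_rcoset; apply/negbTE/negP=> /andP[Xt Xta].
case/negP: notXa; have -> : a = (t * a^-1)^-1 * t by rewrite invMg invgK mulgKV.
by rewrite groupM ?groupV.
Qed.

End CyclicExtension.

Section DihedralCode.
Variables (gT : finGroupType) (n : nat) (x y : gT).
Hypotheses (n_gt1 : 1 < n) (xn : x ^+ (2 ^ n) = 1) (y2 : y ^+ 2 = 1)
  (xy : x ^ y = x^-1) (isoD : <<[set x; y]>> \isog 'D_(2 ^ n.+1)).

Local Notation H := <<[set x; y]>>.
Local Notation X := <[x]>.
Local Notation K a := <<[set x; a]>>.
Local Notation z := (x ^+ (2 ^ n.-1)).

Let n_gt2 : 2 < n.+1 := n_gt1.

Let yV : y^-1 = y := invg_sqr1 y2.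

Lemma conjy_cycle u : u \in X -> u ^ y = u^-1.
Proof. by case/cycleP=> i ->; rewrite conjXg xy expgVn. Qed.

Lemma x_in_join a : x \in K a.
Proof. by rewrite mem_gen ?setU11. Qed.

Lemma in_join a : a \in K a.
Proof. by rewrite mem_gen // !inE eqxx orbT. Qed.

Lemma cycle_sub_join a : X \subset K a.
Proof. by rewrite cycle_subG x_in_join. Qed.

Let nXy : y \in 'N(X).
Proof. by rewrite inE -cycleJ cycle_subG xy groupV cycle_id. Qed.

Let y2X : y ^+ 2 \in X.
Proof. by rewrite y2 group1. Qed.

Let card_dihedral : #|H| = (2 ^ n.+1)%N.
Proof. by rewrite (card_isog isoD) card_2dihedral // ltnS ltnW. Qed.

Lemma y_notin_cycle : y \notin X.
Proof.
apply/negP=> Xy; have := card_dihedral.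
rewrite join_cycle_coset // (rcoset_id Xy) setUid -orderE => ox.
have : (2 ^ n.+1 %| 2 ^ n)%N by rewrite -ox order_dvdn xn.
by rewrite dvdn_Pexp2l // ltnn.
Qed.

Lemma order_dihedral_cycle : #[x] = (2 ^ n)%N.
Proof.
have := card_join_cycle_coset nXy y2X y_notin_cycle.
by rewrite card_dihedral expnS => /eqP; rewrite eqn_pmul2l // => /eqP.
Qed.

Lemma dihedral_rcoset h : h \in H -> h \notin X -> h * y \in X.
Proof. by rewrite join_cycle_coset // in_setU mem_rcoset yV => /orP[-> | ]. Qed.

Lemma dihedral_involution h : h \in H -> h \notin X -> h ^+ 2 = 1.
Proof.
move=> Hh notXh; have Xu := dihedral_rcoset Hh notXh.
rewrite -(mulgK y h) yV; set u := h * y in Xu *.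
by rewrite expg2 -mulgA -{1}yV -conjgE conjy_cycle ?mulgV.
Qed.

Lemma mulg_dihedral_notin u v :
  u \in H -> v \in H -> u \notin X -> v \notin X -> u * v \in X.
Proof.
move=> Hu Hv notXu notXv.
have -> : u * v = (u * y) * (v * y)^-1.
  by rewrite invMg mulgA mulgK (invg_sqr1 (dihedral_involution Hv notXv)).
by rewrite groupM ?groupV // dihedral_rcoset.
Qed.

Lemma dihedral_norm_cycle a : a \in 'N(H) -> a \in 'N(X).
Proof.
move=> nHa; rewrite inE -cycleJ cycle_subG; apply: contraT => notXxa.
have Hxa : x ^ a \in H by rewrite memJ_norm ?x_in_join.
move/eqP: (dihedral_involution Hxa notXxa).
rewrite -conjXg conjg_eq1 -order_dvdn order_dihedral_cycle -{2}(expn1 2).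
by rewrite dvdn_Pexp2l // leqNgt n_gt1.
Qed.

Lemma order_z : #[z] = 2.
Proof. by apply: order_expg_half; rewrite prednK ?order_dihedral_cycle // ltnW. Qed.

Lemma cyclic_involution_cycle (A : {group gT}) t :
  cyclic A -> x \in A -> t \in A -> #[t] = 2 -> <[t]> = <[z]>.
Proof.
move=> cycA Ax At ot; have Az : z \in A by rewrite groupX.
by apply/eqP; rewrite (eq_subG_cyclic cycA) ?cycle_subG // -!orderE ot order_z.
Qed.

Lemma cyclic_join_involution a t : cyclic (K a) -> t \in K a -> #[t] = 2 -> t \in X.
Proof.
move=> cycK Kt ot; rewrite (subsetP (cycleX x (2 ^ n.-1))) //.
by rewrite -(cyclic_involution_cycle cycK (x_in_join a) Kt ot) cycle_id.
Qed.

Lemma extremal_generators_join a : a \notin X -> K a \isog 'Q_(2 ^ n.+1) ->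
  extremal_generators (K a) 2 n.+1 (x, a).
Proof.
move=> notXa isoQ; split; rewrite ?order_dihedral_cycle ?x_in_join //.
  by rewrite (card_isog isoQ) card_quaternion.
by rewrite in_setD notXa in_join.
Qed.

Lemma quaternion_join_involution a t : a \notin X -> K a \isog 'Q_(2 ^ n.+1) ->
  t \in K a -> #[t] = 2 -> t \in X.
Proof.
move=> notXa isoQ Kt ot; have genK := extremal_generators_join notXa isoQ.
have [_ _ [_ _ inv1 _ _] _ _] := quaternion_structure n_gt2 genK isoQ.
by rewrite (inv1 t Kt ot) mem_cycle.
Qed.

Lemma quaternion_join_sqr a t : a \notin X -> K a \isog 'Q_(2 ^ n.+1) ->
  t \in K a -> t ^+ 2 \in <[x ^+ 2]>.
Proof.
move=> notXa isoQ Kt; have genK := extremal_generators_join notXa isoQ.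
have [_ _ [_ _ _ _ mho] _ _] := quaternion_structure n_gt2 genK isoQ.
have [oK _ _ _] := genK; have p2K : 2.-group (K a) by rewrite /pgroup oK pnatX pnat_id.
by rewrite -(mho 1%N isT); apply: (Mho_p_elt 1 Kt (mem_p_elt p2K Kt)).
Qed.

Definition code_conditions a := [/\ a ^+ 2 \in X,
  (cyclic (K a) /\ #|K a| = (2 ^ n.+1)%N -> a ^ y = a^-1) &
  (K a \isog 'Q_(2 ^ n.+1) -> [~ a, y] \in <[x ^+ 2]>)].

Lemma sqr_cycle_of_coset_involution a h :
  a \in 'N(H) -> h \in H -> (h * a) ^+ 2 = 1 -> a ^+ 2 \in X.
Proof.
move=> nHa Hh ha2; have nHb : h * a \in 'N(H) := groupM (subsetP (normG H) h Hh) nHa.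
have nXb := dihedral_norm_cycle nHb.
have -> : a ^+ 2 = h^-1 * h^-1 ^ (h * a).
  by rewrite conjgE (invg_sqr1 ha2) !mulgA mulVg mul1g mulgKV expg2.
have [Xh | notXh] := boolP (h \in X); first by rewrite groupM ?memJ_norm ?groupV.
by rewrite mulg_dihedral_notin ?memJ_norm ?groupV.
Qed.

Lemma code_conditions_of_coset_involution a h : a \in 'N(H) -> a \notin H ->
  h \in H -> (h * a) ^+ 2 = 1 -> code_conditions a.
Proof.
move=> nHa notHa Hh ha2; have a2X := sqr_cycle_of_coset_involution nHa Hh ha2.
have notXa : a \notin X by apply: contra notHa; apply/subsetP/cycle_sub_join.
have XK u : u \in X -> u \in K a := subsetP (cycle_sub_join a) u.
have [Xh | notXh] := boolP (h \in X).
  have notXb : h * a \notin X by rewrite (groupMl _ Xh).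
  have Kb : h * a \in K a := groupM (XK h Xh) (in_join a).
  have ob : #[h * a] = 2 by apply: nt_prime_order => //; apply: contraNneq notXb => ->.
  split=> // [[cycK _] | isoQ]; case/negP: notXb.
    exact: cyclic_join_involution cycK Kb ob.
  exact: quaternion_join_involution notXa isoQ Kb ob.
pose u := h * y; pose v := u^-1 * a.
have Xu : u \in X := dihedral_rcoset Hh notXh.
have Kv : v \in K a by rewrite groupM ?in_join // groupV XK.
have def_a : a = u * v by rewrite mulKVg.
have def_v : v = y * (h * a).
  by rewrite /v /u invMg yV (invg_sqr1 (dihedral_involution Hh notXh)) mulgA.
have vy : v ^ y = v^-1 by rewrite def_v conjgE -mulgA mulKg invMg (invg_sqr1 ha2) yV.
have ay : a ^ y = u^-1 * v^-1 by rewrite {1}def_a conjMg conjy_cycle // vy.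
clearbody u v; split=> // [[cycK _] | isoQ].
  have cuv : commute u^-1 v^-1.
    by apply: (centsP (cyclic_abelian cycK)); rewrite groupV //; apply: XK.
  by rewrite ay {1}def_a invMg cuv.
have -> : [~ a, y] = (u^-1 ^ v) ^+ 2 * v^-1 ^+ 2.
  by rewrite /commg ay {1}def_a invMg conjgE !expg2 !mulgA !mulgK.
have sqrK t : t \in K a -> t ^+ 2 \in <[x ^+ 2]> := quaternion_join_sqr notXa isoQ.
by apply: groupM; apply: sqrK; rewrite ?groupV // groupJ // groupV; apply: XK.
Qed.

Lemma order_x2 : #[x ^+ 2] = (2 ^ n.-1)%N.
Proof.
have def_2n : (2 ^ n = 2 * 2 ^ n.-1)%N by rewrite -expnS prednK // ltnW.
by rewrite orderXdiv order_dihedral_cycle def_2n ?dvdn_mulr // mulKn.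
Qed.

Lemma z_in_cycle2 : z \in <[x ^+ 2]>.
Proof.
have def_2n1 : (2 ^ n.-1 = 2 * 2 ^ n.-2)%N by rewrite -expnS; congr (2 ^ _)%N; lia.
by rewrite def_2n1 expgM mem_cycle.
Qed.

Lemma sqr_in_cycle2 u : u \in X -> u ^+ 2 \in <[x ^+ 2]>.
Proof. by case/cycleP=> i ->; rewrite -expgM mulnC expgM mem_cycle. Qed.

Lemma cycle2_odd m : odd m -> x ^+ 2 \in <[(x ^+ 2) ^+ m]>.
Proof.
move=> odd_m; have : generator <[x ^+ 2]> ((x ^+ 2) ^+ m).
  by rewrite generator_coprime order_x2 coprime_pexpl ?coprime2n // -ltnS prednK // ltnW.
by move/eqP <-; apply: cycle_id.
Qed.

Lemma z_in_cycle d : d \in X -> d != 1 -> z \in <[d]>.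
Proof.
move=> Xd d_neq1; have : #[d] %| 2 ^ n by rewrite -order_dihedral_cycle order_dvdG.
case/dvdn_pfactor=> // [[|m]] _ od; first by rewrite -order_eq1 od in d_neq1.
have Xt : d ^+ (2 ^ m) \in X by rewrite groupX.
apply: subsetP (cycleX d (2 ^ m)) _ _.
rewrite (cyclic_involution_cycle (cycle_cyclic x) (cycle_id x) Xt) ?cycle_id //.
exact: order_expg_half.
Qed.

Lemma mul_y_cycle c : c \in X -> y * c = c^-1 * y.
Proof.
by move=> Xc; rewrite -conjy_cycle // conjgE -mulgA -(mulgA c) -expg2 y2 mulg1 yV.
Qed.

Lemma commute_conj_cycle a : a \in 'N(X) -> commute x (x ^ a).
Proof.
move=> nXa; have Xxa : x ^ a \in X by rewrite memJ_norm ?cycle_id.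
exact: (centsP (cycle_abelian x)) _ (cycle_id x) _ Xxa.
Qed.

Section CosetSquares.
Variable a : gT.
Hypotheses (nXa : a \in 'N(X)) (a2X : a ^+ 2 \in X).

Lemma conjV_cycle u : u \in X -> u ^ a^-1 = u ^ a.
Proof.
move=> Xu; rewrite -{2}(mulKg a a) -expg2 conjgM; apply/esym/conjg_fixP/commgP.
by apply: (centsP (cycle_abelian x)); rewrite ?memJ_norm ?groupV.
Qed.

Lemma sqr_mul_conjV g : (g * a) ^+ 2 = g * g ^ a^-1 * a ^+ 2.
Proof. by rewrite conjgE invgK !expg2 !mulgA mulgKV. Qed.

Lemma sqr_mul_cycle u : u \in X -> (u * a) ^+ 2 = u * u ^ a * a ^+ 2.
Proof. by move=> Xu; rewrite sqr_mul_conjV conjV_cycle. Qed.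

Lemma sqr_mul_y_cycle u : u \in X ->
  (u * y * a) ^+ 2 = u * (u ^ a)^-1 * (y * y ^ a^-1 * a ^+ 2).
Proof.
move=> Xu; have Xua : u ^ a \in X by rewrite memJ_norm.
rewrite sqr_mul_conjV conjMg (conjV_cycle Xu).
have -> : u * y * (u ^ a * y ^ a^-1) = u * (y * u ^ a) * y ^ a^-1 by rewrite !mulgA.
by rewrite mul_y_cycle // !mulgA.
Qed.

Lemma coset_involution_cycle :
  a ^+ 2 \in <[x * x ^ a]> -> exists2 h, h \in H & (h * a) ^+ 2 = 1.
Proof.
move/groupVr/cycleP=> [i def_a2]; exists (x ^+ i).
  by rewrite (subsetP (cycle_sub_join y)) ?mem_cycle.
rewrite sqr_mul_cycle ?mem_cycle // conjXg -expgMn; last exact: commute_conj_cycle.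
by rewrite -def_a2 mulVg.
Qed.

Lemma coset_involution_cycle_y : y * y ^ a^-1 * a ^+ 2 \in <[x * (x ^ a)^-1]> ->
  exists2 h, h \in H & (h * a) ^+ 2 = 1.
Proof.
move/groupVr/cycleP=> [i def_c]; exists (x ^+ i * y).
  by rewrite groupM ?in_join // (subsetP (cycle_sub_join y)) ?mem_cycle.
rewrite sqr_mul_y_cycle ?mem_cycle // conjXg -expgVn -expgMn; last first.
  exact/commuteV/commute_conj_cycle.
by rewrite -def_c mulVg.
Qed.

End CosetSquares.

Lemma quaternion_join_of_relations a : a \notin X -> a ^+ 2 = z -> x ^ a = x^-1 ->
  K a \isog 'Q_(2 ^ n.+1).
Proof.
move=> notXa a2 xa.
have nXa : a \in 'N(X) by rewrite inE -cycleJ cycle_subG xa groupV cycle_id.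
apply/(isoGrpP _ (Grp_quaternion n_gt2)); split.
  rewrite card_quaternion // card_join_cycle_coset // ?a2 ?groupX ?cycle_id //.
  by rewrite order_dihedral_cycle expnS.
have eqXaK : X <*> <[a]> = K a.
  apply/eqP; rewrite eqEsubset join_subG !cycle_subG x_in_join in_join gen_subG.
  by apply/subsetP=> t /set2P[]->; rewrite mem_gen // inE cycle_id ?orbT.
by apply/existsP; exists (x, a); rewrite /= eqXaK !xpair_eqE xn a2 xa !eqxx.
Qed.

Section CosetInvolutions.
Variable a : gT.
Hypotheses (nXa : a \in 'N(X)) (notXa : a \notin X) (a2X : a ^+ 2 \in X).

Lemma coset_involution_of_cyclic_condition :
    (cyclic (K a) /\ #|K a| = (2 ^ n.+1)%N -> a ^ y = a^-1) ->
    x ^+ 2 \in <[x * x ^ a]> ->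
  exists2 h, h \in H & (h * a) ^+ 2 = 1.
Proof.
move=> cyc_cond x2d; have [j def_a2] : exists j, a ^+ 2 = x ^+ j.
  by case/cycleP: a2X => j ->; exists j.
have [odd_j | even_j] := boolP (odd j); last first.
  apply: coset_involution_cycle => //; apply: subsetP (_ : <[x ^+ 2]> \subset _) _ _.
    by rewrite cycle_subG.
  by rewrite def_a2 -(odd_double_half j) (negbTE even_j) add0n -mul2n expgM mem_cycle.
have : generator X (x ^+ j).
  by rewrite generator_coprime order_dihedral_cycle coprime_pexpl ?coprime2n // ltnW.
move/eqP=> defX; have XA : X \subset <[a]> by rewrite defX cycle_subG -def_a2 mem_cycle.
have defK : K a = <[a]>.
  apply/eqP; rewrite eqEsubset cycle_subG in_join gen_subG andbT.
  by apply/subsetP=> t /set2P[]->; rewrite ?cycle_id // (subsetP XA) ?cycle_id.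
have ay : a ^ y = a^-1.
  apply: cyc_cond; rewrite defK cycle_cyclic -defK card_join_cycle_coset //.
  by rewrite order_dihedral_cycle expnS.
exists y; first exact: in_join.
by rewrite expg2 -{1}yV mulgA -(mulgA _ a y) -conjgE ay mulVg.
Qed.

Lemma coset_involution_of_quaternion_condition :
    (K a \isog 'Q_(2 ^ n.+1) -> [~ a, y] \in <[x ^+ 2]>) ->
    x ^+ 2 \in <[x * (x ^ a)^-1]> ->
  exists2 h, h \in H & (h * a) ^+ 2 = 1.
Proof.
move=> Q_cond x2e; have [j def_a2] : exists j, a ^+ 2 = x ^+ j.
  by case/cycleP: a2X => j ->; exists j.
have Xxa : x ^ a \in X by rewrite memJ_norm ?cycle_id.
have a2a : (a ^+ 2) ^ a = a ^+ 2 by rewrite conjgE -expgSr expgS mulKg.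
have e_j : (x * (x ^ a)^-1) ^+ j = 1.
  rewrite expgMn; last exact/commuteV/commute_conj_cycle.
  by rewrite expgVn -conjXg -def_a2 a2a mulgV.
have /dvdnP[q def_j] : (2 ^ n.-1 %| j)%N.
  have /(dvdn_trans _) : (#[x * (x ^ a)^-1] %| j)%N by rewrite order_dvdn e_j.
  by apply; rewrite -order_x2 !orderE cardSg // cycle_subG.
have a2z : a ^+ 2 = z ^+ odd q.
  by rewrite def_a2 def_j mulnC expgM -(expg_mod_order _ q) order_z modn2.
case: (odd q) a2z => /= [a2z | a2z]; last by exists 1; rewrite ?group1 // mul1g a2z.
rewrite expg1 in a2z.
have [xa | xa_ne] := eqVneq (x ^ a) x^-1.
  apply: coset_involution_cycle_y => //; apply: subsetP (_ : <[x ^+ 2]> \subset _) _ _.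
    by rewrite cycle_subG.
  have -> : y * y ^ a^-1 = [~ a, y] ^ a^-1.
    by rewrite /commg !conjgE !invgK yV !mulgA mulgV mul1g.
  have nX2a : a^-1 \in 'N(<[x ^+ 2]>).
    by rewrite groupV inE -cycleJ cycle_subG conjXg sqr_in_cycle2.
  rewrite groupM ?memJ_norm ?a2z ?z_in_cycle2 //.
  exact/Q_cond/quaternion_join_of_relations.
apply: coset_involution_cycle => //.
rewrite a2z z_in_cycle ?(groupM (cycle_id x) Xxa) //.
by rewrite -eq_invg_mul eq_sym.
Qed.

End CosetInvolutions.

Lemma coset_involution_of_code_conditions a : a \in 'N(H) -> a \notin H ->
  code_conditions a -> exists2 h, h \in H & (h * a) ^+ 2 = 1.
Proof.
move=> nHa notHa [a2X cyc_cond Q_cond]; have nXa := dihedral_norm_cycle nHa.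
have notXa : a \notin X by apply: contra notHa; apply/subsetP/cycle_sub_join.
have /cycleP[k def_xa] : x ^ a \in X by rewrite memJ_norm ?cycle_id.
have odd_k : odd k.
  have : generator X (x ^+ k) by rewrite /generator -def_xa cycleJ (normP nXa).
  by rewrite generator_coprime order_dihedral_cycle coprime_pexpl ?coprime2n // ltnW.
have def_k : k = (k./2).*2.+1 by rewrite -[in LHS](odd_double_half k) odd_k.
have [odd_l | even_l] := boolP (odd k./2).
  apply: coset_involution_of_quaternion_condition Q_cond _ => //.
  rewrite def_xa def_k (expgSr x (k./2).*2) invMg mulKVg -mul2n expgM cycleV.
  exact: cycle2_odd.
apply: coset_involution_of_cyclic_condition cyc_cond _ => //.
by rewrite def_xa def_k -expgS -doubleS -mul2n expgM cycle2_odd //= even_l.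
Qed.
End DihedralCode.

Theorem corollary3p5 (gT : finGroupType) (G : {group gT}) (n : nat) (x y : gT) :
  (2 <= n)%N ->
  x \in G -> y \in G ->
  x ^+ (2 ^ n) = 1 -> y ^+ 2 = 1 -> x ^ y = x^-1 ->
  <<[set x; y]>> \isog 'D_(2 ^ n.+1) ->
  perfect_code_of G <<[set x; y]>> <->
  (forall a, a \in 'N_G(<<[set x; y]>>) :\: <<[set x; y]>> ->
     a ^+ 2 \in <<[set x; y]>> ->
     [/\ a ^+ 2 \in <[x]>,
         (cyclic <<[set x; a]>> /\ #|<<[set x; a]>>| = (2 ^ n.+1)%N -> a ^ y = a^-1) &
         (<<[set x; a]>> \isog 'Q_(2 ^ n.+1) -> [~ a, y] \in <[x ^+ 2]>)]).
Proof.
move=> n_gt1 Gx Gy xn y2 xy isoD.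
have sHG : <<[set x; y]>> \subset G by rewrite gen_subG; apply/subsetP=> t /set2P[]->.
have pH : 2.-group <<[set x; y]>>.
  by rewrite /pgroup (card_isog isoD) card_2dihedral ?pnatX ?pnat_id // ltnS ltnW.
apply: iff_trans (perfect_code_2groupP sHG pH) _.
split=> coset_inv a aN a2H; have /setDP[/setIP[_ nHa] notHa] := aN.
  have [h Hh ha2] := coset_inv a aN a2H.
  exact: code_conditions_of_coset_involution ha2.
exact: coset_involution_of_code_conditions (coset_inv a aN a2H).
Qed.
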